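(* Let $X,Y$ be u.l.f.\ metric spaces and let $\alpha\colon X\to\mathrm{Fin}(Y)$ and $\beta\colon Y\to\mathrm{Fin}(X)$ be functions such that (Bij1) whenever $f\colon X\to Y$ and $g\colon Y\to X$ satisfy $f(x)\in\alpha(x)$ for all $x\in X$ and $g(y)\in\beta(y)$ for all $y\in Y$, then $f$ and $g$ are mutually inverse coarse equivalences (in particular all $\alpha(x)$, $\beta(y)$ are nonempty); and (Bij2) for every finite $A\subseteq X$ and finite $B\subseteq Y$, $|A|\le|\bigcup_{x\in A}\alpha(x)|$ and $|B|\le|\bigcup_{y\in B}\beta(y)|$. Then every function $f\colon X\to Y$ with $f(x)\in\alpha(x)$ for all $x\in X$ is close to a bijective coarse equivalence $X\to Y$.
   Context: $\mathrm{Fin}(Y)$ is the set of finite subsets of $Y$. A map $f\colon X\to Y$ is coarse if for every $r>0$ there is $s>0$ with $d_X(x,x')\le r\Rightarrow d_Y(f(x),f(x'))\le s$; $f,f'$ are close if $\sup_x d_Y(f(x),f'(x))<\infty$; coarse maps $f\colon X\to Y$, $g\colon Y\to X$ are mutually inverse coarse equivalences if $f\circ g$ is close to $\mathrm{Id}_Y$ and $g\circ f$ close to $\mathrm{Id}_X$. *)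

From Stdlib Require Import Reals List.
Import ListNotations.
Open Scope R_scope.

Definition is_metric {X : Type} (d : X -> X -> R) : Prop :=
  (forall x y, 0 <= d x y) /\
  (forall x y, d x y = 0 <-> x = y) /\
  (forall x y, d x y = d y x) /\
  (forall x y z, d x z <= d x y + d y z).

Definition ulf {X : Type} (d : X -> X -> R) : Prop :=
  forall r : R, exists N : nat, forall (x : X) (L : list X),
    NoDup L -> (forall z, In z L -> d x z <= r) -> (length L <= N)%nat.

Definition coarse {X Y : Type} (dX : X -> X -> R) (dY : Y -> Y -> R)
  (f : X -> Y) : Prop :=
  forall r : R, 0 < r -> exists s : R, 0 < s /\
    forall x x', dX x x' <= r -> dY (f x) (f x') <= s.

Definition close {X Y : Type} (dY : Y -> Y -> R) (f f' : X -> Y) : Prop :=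
  exists C : R, forall x, dY (f x) (f' x) <= C.

Definition mutually_inverse_coarse_equivalences {X Y : Type}
  (dX : X -> X -> R) (dY : Y -> Y -> R) (f : X -> Y) (g : Y -> X) : Prop :=
  coarse dX dY f /\ coarse dY dX g /\
  close dY (fun y => f (g y)) (fun y => y) /\
  close dX (fun x => g (f x)) (fun x => x).

Definition coarse_equivalence {X Y : Type}
  (dX : X -> X -> R) (dY : Y -> Y -> R) (f : X -> Y) : Prop :=
  exists g : Y -> X, mutually_inverse_coarse_equivalences dX dY f g.

Definition bijective_fun {X Y : Type} (f : X -> Y) : Prop :=
  (forall x x', f x = f x' -> x = x') /\ (forall y, exists x, f x = y).

(* Fin(Y) is represented by lists: alpha x : list Y stands for the finite set
   of its elements. |A| <= |U_{x in A} alpha x| for a finite A (given by a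
   duplicate-free list LA) is expressed via a duplicate-free enumeration of
   the union. *)
Definition union_card_ge {X Y : Type} (alpha : X -> list Y) : Prop :=
  forall LA : list X, NoDup LA ->
    exists LB : list Y, NoDup LB /\
      (forall y, In y LB <-> exists x, In x LA /\ In y (alpha x)) /\
      (length LA <= length LB)%nat.

From Stdlib Require Import Reals List Lra.
From mathcomp Require Import all_boot boolp classical_sets finmap zify.
Local Open Scope classical_set_scope.
Set Implicit Arguments. Unset Strict Implicit. Unset Printing Implicit Defensive.

(* Bij2 is Hall's condition for the families alpha and beta of finite sets, so
   Hall's marriage theorem for infinite families of finite sets (obtained from a
   minimal Hall subfamily, which exists by Zorn's lemma and consists of
   singletons) gives injections i and j with i x in alpha x and j y in beta y.
   Schroeder-Bernstein glues them into a bijection h such that for every x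
   either h x = i x lies in alpha x, or j (h x) = x lies in beta (h x).  In both
   cases d(f x, h x) is bounded using Bij1: any two selections of alpha are
   coarse inverse to a common selection of beta, hence close to each other.
   Finally a map close to a coarse equivalence is a coarse equivalence. *)

Lemma chain_finite_lower_bound (T : Type) (I : eqType) (le : T -> T -> Prop)
    (A : set T) (P : I -> T -> Prop) (s : seq I) :
  A !=set0 -> total_on A le -> (forall i a b, le a b -> P i a -> P i b) ->
  (forall i, i \in s -> exists2 a, A a & P i a) ->
  exists2 a, A a & forall i, i \in s -> P i a.
Proof.
move=> [a0 Aa0] Atot Pmono; elim: s => [_|i s IH hs]; first by exists a0.
have [a Aa Pa] : exists2 a, A a & forall j, j \in s -> P j a.
  by apply: IH => j js; apply: hs; rewrite inE js orbT.
have [b Ab Pb] := hs i (mem_head i s).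
have [ab|ba] := Atot a b Aa Ab.
- by exists b => // j; rewrite inE => /predU1P [->|/Pa /Pmono]; last exact.
- by exists a => // j; rewrite inE => /predU1P [->|/Pa]; [exact: Pmono Pb|].
Qed.

Section HallMarriage.
Local Open Scope fset_scope.
Variables X Y : choiceType.
Implicit Types (S : X -> {fset Y}) (B : {fset X}).

Definition fam_cup S B := \bigcup_(x <- B) S x.

Definition hall S := forall B, (#|` B| <= #|` fam_cup S B|)%N.

Definition fam_sub S S' := forall x, S x `<=` S' x.

Definition fam_del S x0 y x := if x == x0 then S x0 `\ y else S x.

Lemma fam_cupP S B y : reflect (exists2 x, x \in B & y \in S x) (y \in fam_cup S B).
Proof.
apply: (iffP (bigfcupP _ _ _ _)) => [[x /andP[xB _] yS]|[x xB yS]]; exists x => //.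
by rewrite xB.
Qed.

Lemma fam_cupS S S' B B' : {subset B <= B'} ->
  (forall x, x \in B -> S x `<=` S' x) -> fam_cup S B `<=` fam_cup S' B'.
Proof.
move=> BB' SS'; apply/fsubsetP => y /fam_cupP [x xB yS].
by apply/fam_cupP; exists x; [exact: BB' | exact: fsubsetP (SS' x xB) y yS].
Qed.

Lemma fam_cup1 S x : fam_cup S [fset x] = S x.
Proof.
apply/fsetP => y; apply/fam_cupP/idP => [[z /fset1P -> //]|yS].
by exists x => //; exact/fset1P.
Qed.

Lemma fam_del_sub S x0 y : fam_sub (fam_del S x0 y) S.
Proof. by move=> x; rewrite /fam_del; case: eqP => [->|_]; [exact: fsubsetDl|]. Qed.

Lemma fam_delE S x0 y x : x != x0 -> fam_del S x0 y x = S x.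
Proof. by rewrite /fam_del => /negbTE ->. Qed.

Lemma hall_fam_del_mem S x0 y B : hall S ->
  (#|` fam_cup (fam_del S x0 y) B| < #|` B|)%N -> x0 \in B.
Proof.
move=> HS hB; apply/negPn/negP => x0B.
have : fam_cup S B `<=` fam_cup (fam_del S x0 y) B.
  apply: fam_cupS => // x xB; rewrite fam_delE //.
  by apply: contraNneq x0B => <-.
by move/fsubset_leq_card; have := HS B; lia.
Qed.

(* If both deletions failed, with violating sets B1 and B2, the neighbourhoods
   of B1 `|` B2 and (B1 `&` B2) `\ x0 would be too small by submodularity. *)
Lemma hall_fam_del S x0 y1 y2 : hall S -> y1 != y2 ->
  y1 \in S x0 -> y2 \in S x0 -> hall (fam_del S x0 y1) \/ hall (fam_del S x0 y2).
Proof.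
move=> HS y12 y1S y2S.
have [|/existsNP [B1 /negP]] := pselect (hall (fam_del S x0 y1)); first by left.
rewrite -ltnNge => h1; right => B2; rewrite leqNgt; apply/negP => h2.
have x0B1 := hall_fam_del_mem HS h1; have x0B2 := hall_fam_del_mem HS h2.
set P1 := fam_cup _ B1 in h1; set P2 := fam_cup _ B2 in h2.
set B1' := B1 `\ x0; set B2' := B2 `\ x0.
have c1 : #|` B1| = (1 + #|` B1'|)%N by rewrite (cardfsD1 x0) x0B1.
have c2 : #|` B2| = (1 + #|` B2'|)%N by rewrite (cardfsD1 x0) x0B2.
have cU : #|` x0 |` (B1' `|` B2')| = (1 + #|` B1' `|` B2'|)%N.
  by rewrite cardfsU1 in_fsetU !in_fsetD1 eqxx.
have sU : fam_cup S (x0 |` (B1' `|` B2')) `<=` P1 `|` P2.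
  apply/fsubsetP => y /fam_cupP [z /fset1UP [-> yS|/fsetUP [] /fsetD1P [zx zB] yS]];
    apply/fsetUP.
  - have [->|ny1] := eqVneq y y1.
      by right; apply/fam_cupP; exists x0; rewrite // /fam_del eqxx in_fsetD1 y12.
    by left; apply/fam_cupP; exists x0; rewrite // /fam_del eqxx in_fsetD1 ny1.
  - by left; apply/fam_cupP; exists z; rewrite // fam_delE.
  - by right; apply/fam_cupP; exists z; rewrite // fam_delE.
have sI : fam_cup S (B1' `&` B2') `<=` P1 `&` P2.
  apply/fsubsetP => y /fam_cupP [z /fsetIP [/fsetD1P [zx zB1] /fsetD1P [_ zB2]] yS].
  by apply/fsetIP; split; apply/fam_cupP; exists z; rewrite // fam_delE.
have := fsubset_leq_card sU; have := fsubset_leq_card sI.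
have := HS (x0 |` (B1' `|` B2')); have := HS (B1' `&` B2').
have := cardfsUI P1 P2; have := cardfsUI B1' B2'.
lia.
Qed.

Section Minimal.
Variable alpha0 : X -> {fset Y}.

Definition fam_meet (T : Type) (A : set T) (F : T -> X -> {fset Y}) x :=
  [fset y in alpha0 x | `[< forall t, A t -> y \in F t x >]].

Lemma fam_meet_sub T (A : set T) F t : A t -> fam_sub (fam_meet A F) (F t).
Proof. by move=> At x; apply/fsubsetP => y; rewrite !inE => /andP [_ /asboolP]; apply. Qed.

(* The Hall condition only involves finite sets, and on finitely many points
   some member of a chain already lies below the meet. *)
Lemma hall_fam_meet T (A : set T) F : A !=set0 ->
  total_on A (fun s t => fam_sub (F t) (F s)) ->
  (forall t, A t -> hall (F t) /\ fam_sub (F t) alpha0) -> hall (fam_meet A F).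
Proof.
move=> [t0 At0] Atot AF.
have Fmeet x : exists2 t, A t & F t x `<=` fam_meet A F x.
  have [t At Ht] : exists2 t, A t & forall y, y \in enum_fset (alpha0 x) ->
      y \in F t x -> y \in fam_meet A F x.
    apply: (chain_finite_lower_bound (ex_intro _ t0 At0) Atot).
      by move=> y a b ba ha yb; apply: ha; exact: fsubsetP (ba x) y yb.
    move=> y _; have [yA|/existsNP [t /not_implyP [At yt]]] :=
      pselect (forall t, A t -> y \in F t x).
      exists t0 => // yt0; rewrite !inE; apply/andP; split; last exact/asboolP.
      exact: fsubsetP (proj2 (AF t0 At0) x) y yt0.
    by exists t => // /yt.
  exists t => //; apply/fsubsetP => y yt; apply: (Ht y _ yt).
  exact: fsubsetP (proj2 (AF t At) x) y yt.
move=> B.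
have [t At Ht] := @chain_finite_lower_bound _ _ _ _
  (fun x t => F t x `<=` fam_meet A F x) (enum_fset B)
  (ex_intro _ t0 At0) Atot (fun x a b ba ha => fsubset_trans (ba x) ha)
  (fun x _ => Fmeet x).
apply: leq_trans (proj1 (AF t At) B) _; apply/fsubset_leq_card/fam_cupS => //.
Qed.

Lemma exists_minimal_hall : hall alpha0 -> exists S, [/\ hall S, fam_sub S alpha0 &
  forall S', hall S' -> fam_sub S' S -> fam_sub S S'].
Proof.
move=> H0.
pose T := {S | hall S /\ fam_sub S alpha0}.
pose R (s t : T) := `[< fam_sub (proj1_sig t) (proj1_sig s) >].
pose t0 : T := exist _ alpha0 (conj H0 (fun x => fsubset_refl _)).
have [t tmax] : exists t, premaximal R t.
  apply: (ZL_preorder t0).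
  - by move=> s; apply/asboolP => x; exact: fsubset_refl.
  - move=> r s t /asboolP sr /asboolP ts; apply/asboolP => x.
    exact: fsubset_trans (ts x) (sr x).
  - move=> A Atot.
    have [nA|A0] := pselect (A !=set0); last by exists t0 => s As; case: A0; exists s.
    have meetH : hall (fam_meet A sval) /\ fam_sub (fam_meet A sval) alpha0.
      split; last by move=> x; apply/fsubsetP => y; rewrite !inE => /andP [].
      apply: hall_fam_meet => // [s t As At|t _]; last exact: proj2_sig t.
      by case: (Atot s t As At) => /asboolP; [left|right].
    exists (exist _ (fam_meet A sval) meetH : T) => s As.
    by apply/asboolP; exact: fam_meet_sub.
case: t tmax => S [HS Ssub] tmax; exists S; split => // S' HS' S'S.
have /(_ (exist _ S' (conj HS' (fun x => fsubset_trans (S'S x) (Ssub x))))) := tmax.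
by move=> /(_ (asboolT S'S)) /asboolP.
Qed.
End Minimal.

Lemma minimal_hall_card1 S : hall S ->
  (forall S', hall S' -> fam_sub S' S -> fam_sub S S') -> forall x, #|` S x| = 1%N.
Proof.
move=> HS Smin x0; have := HS [fset x0]; rewrite fam_cup1 cardfs1 => ge1.
apply/eqP; rewrite eqn_leq ge1 andbT leqNgt; apply/negP => gt1.
have [y1 y1S] : exists y1, y1 \in S x0.
  by apply/fset0Pn; rewrite -cardfs_gt0; lia.
have [y2 /fsetD1P [y21 y2S]] : exists y2, y2 \in S x0 `\ y1.
  by apply/fset0Pn; rewrite -cardfs_gt0; move: gt1; rewrite (cardfsD1 y1) y1S; lia.
have del_not_hall y : y \in S x0 -> ~ hall (fam_del S x0 y).
  move=> yS Hdel; have := fsubsetP (Smin _ Hdel (fam_del_sub S x0 y) x0) y yS.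
  by rewrite /fam_del eqxx in_fsetD1 eqxx.
by case: (hall_fam_del HS y21 y2S y1S) => /del_not_hall; apply.
Qed.

Theorem hall_marriage (alpha0 : X -> {fset Y}) : hall alpha0 ->
  exists i : X -> Y, injective i /\ forall x, i x \in alpha0 x.
Proof.
case/exists_minimal_hall => S [HS Ssub Smin].
have card1 := minimal_hall_card1 HS Smin.
have [i Si] := choice (fun x => cardfs1P (S x) (introT eqP (card1 x))).
exists i; split => [x x' eix|x]; last by apply: (fsubsetP (Ssub x)); rewrite Si fset11.
apply/eqP; apply: contraT => nx.
have : fam_cup S [fset x; x'] `<=` [fset i x].
  by apply/fsubsetP => y /fam_cupP [z /fset2P [] -> ]; rewrite Si // -eix.
move/fsubset_leq_card; have := HS [fset x; x']; rewrite cardfs2 nx cardfs1; lia.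
Qed.
End HallMarriage.

Lemma InP {T : eqType} {x : T} {s : seq T} : reflect (In x s) (x \in s).
Proof.
elim: s => [|a s IH] /=; first by right.
rewrite inE; apply: (iffP predU1P) => [[->|/IH]|[->|/IH]]; by [left|right].
Qed.

Lemma NoDupP {T : eqType} {s : seq T} : reflect (NoDup s) (uniq s).
Proof.
elim: s => [|a s IH] /=; first by left; constructor.
apply: (iffP andP) => [[/InP aNs /IH]|/NoDup_cons_iff [aNs /IH]]; last by split => //; apply/InP.
exact: NoDup_cons.
Qed.

Lemma union_card_ge_injection (X Y : choiceType) (alpha : X -> list Y) :
  union_card_ge alpha -> exists i : X -> Y, injective i /\ forall x, In (i x) (alpha x).
Proof.
move=> Halpha; have [|i [i_inj hi]] := @hall_marriage _ _ (fun x => [fset y in alpha x]%fset).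
  move=> B; have [LB [/NoDupP LBuniq [LBE le]]] := Halpha _ (elimT NoDupP (fset_uniq B)).
  apply: leq_trans (introT leP le) (uniq_leq_size LBuniq _) => y /InP /LBE [x [/InP xB /InP yx]].
  by apply/fam_cupP; exists x; rewrite // inE.
by exists i; split => // x; apply/InP; have := hi x; rewrite inE.
Qed.

Section SchroederBernstein.
Variables (X Y : Type) (i : X -> Y) (j : Y -> X).
Hypotheses (i_inj : injective i) (j_inj : injective j).

(* The points reached by iterating [j \o i] from outside the range of [j]:
   there the bijection is [i], elsewhere it is the inverse of [j]. *)
Definition sb_chain x :=
  exists n x0, (forall y, j y <> x0) /\ x = iter n (j \o i) x0.

Lemma sb_chain_ji x : sb_chain x -> sb_chain (j (i x)).
Proof. by case=> n [x0 [x0j ->]]; exists n.+1, x0. Qed.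

Lemma sb_chain_j y : sb_chain (j y) -> exists2 x, sb_chain x & i x = y.
Proof.
case=> [[|n] [x0 [x0j /= e]]]; first by case: (x0j y).
by exists (iter n (j \o i) x0); [exists n, x0 | exact: j_inj].
Qed.

Theorem schroeder_bernstein :
  exists h : X -> Y, bijective_fun h /\ forall x, h x = i x \/ j (h x) = x.
Proof.
have hex x : exists y, (sb_chain x /\ y = i x) \/ (~ sb_chain x /\ j y = x).
  have [cx|ncx] := pselect (sb_chain x); first by exists (i x); left.
  have [[y jy]|nj] := pselect (exists y, j y = x); first by exists y; right.
  by case: ncx; exists 0%N, x; split => // y jy; apply: nj; exists y.
have [h hh] := choice hex.
exists h; split; last by move=> x; case: (hh x) => [[_ ->]|[_ ->]]; [left|right].
split=> [x x' e|y].
  case: (hh x) (hh x') => [[cx ex]|[ncx ex]] [[cx' ex']|[ncx' ex']].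
  - by apply: i_inj; rewrite -ex -ex'.
  - by case: ncx'; rewrite -ex' -e ex; exact: sb_chain_ji.
  - by case: ncx; rewrite -ex e ex'; exact: sb_chain_ji.
  - by rewrite -ex -ex' e.
have [/sb_chain_j [x cx <-]|ncy] := pselect (sb_chain (j y)).
  by exists x; case: (hh x) => [[_ ->]|[]].
by exists (j y); case: (hh (j y)) => [[]|[_ /j_inj]].
Qed.
End SchroederBernstein.

Lemma exists_selection_extending (T U : Type) (A : T -> list U) (R : T -> U -> Prop)
    (f0 : T -> U) :
  (forall t, In (f0 t) (A t)) -> (forall t u u', R t u -> R t u' -> u = u') ->
  exists f : T -> U, (forall t, In (f t) (A t)) /\
    forall t u, R t u -> In u (A t) -> f t = u.
Proof.
move=> f0A Rfun.
have ex t : exists u, In u (A t) /\ forall u', R t u' -> In u' (A t) -> u = u'.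
  have [[u [Rtu Au]]|nu] := pselect (exists u, R t u /\ In u (A t)).
    by exists u; split => // u' Rtu' _; exact: Rfun Rtu Rtu'.
  by exists (f0 t); split => // u' Rtu' Au'; case: nu; exists u'.
have [f hf] := choice ex.
by exists f; split => [t|t u Rtu Au]; [case: (hf t) | exact: (proj2 (hf t))].
Qed.

Local Open Scope R_scope.

Lemma coarse_bounded (X Y : Type) (dX : X -> X -> R) (dY : Y -> Y -> R) (f : X -> Y)
    (C : R) :
  coarse dX dY f ->
  exists s, forall x x', dX x x' <= C -> dY (f x) (f x') <= s.
Proof.
move=> cf; have [s [_ hs]] := cf (Rmax C 1) (Rlt_le_trans _ _ _ Rlt_0_1 (Rmax_r C 1)).
by exists s => x x' d; apply: hs; apply: Rle_trans d (Rmax_l C 1).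
Qed.

Section CoarseEquivalences.
Variables (X Y : Type) (dX : X -> X -> R) (dY : Y -> Y -> R).
Hypotheses (dX_tri : forall x x' x'', dX x x'' <= dX x x' + dX x' x'')
  (dY_sym : forall y y', dY y y' = dY y' y)
  (dY_tri : forall y y' y'', dY y y'' <= dY y y' + dY y' y'').

Lemma close_of_common_coarse_inverse (f f' : X -> Y) (g : Y -> X) :
  mutually_inverse_coarse_equivalences dX dY f g ->
  mutually_inverse_coarse_equivalences dX dY f' g -> close dY f f'.
Proof.
move=> [_ [_ [_ [C gf]]]] [cf' [_ [[C' f'g] _]]].
have [s hs] := coarse_bounded C cf'.
exists (C' + s) => x.
have := dY_tri (f x) (f' (g (f x))) (f' x); have := hs _ _ (gf x).
by rewrite (dY_sym (f x) (f' (g (f x)))); have := f'g (f x); lra.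
Qed.

Lemma mutually_inverse_close (f h : X -> Y) (g : Y -> X) :
  mutually_inverse_coarse_equivalences dX dY f g -> close dY f h ->
  mutually_inverse_coarse_equivalences dX dY h g.
Proof.
move=> [cf [cg [[C1 fg] [C2 gf]]]] [C fh].
split; [|split=> //; split].
- move=> r r0; have [s [s0 hs]] := cf r r0.
  have C0 := Rmax_r C 0; have CC := Rmax_l C 0.
  exists (s + 2 * Rmax C 0 + 1); split; first lra.
  move=> x x' d; have := hs x x' d; have := fh x; have := fh x'.
  have := dY_tri (h x) (f x) (h x'); have := dY_tri (f x) (f x') (h x').
  rewrite (dY_sym (h x) (f x)); lra.
- exists (C + C1) => y.
  have := dY_tri (h (g y)) (f (g y)) y; have := fh (g y); have := fg y.
  rewrite (dY_sym (h (g y)) (f (g y))); lra.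
- have [s hs] := coarse_bounded C cg.
  exists (s + C2) => x.
  have := dX_tri (g (h x)) (g (f x)) x; have := gf x.
  have := hs (h x) (f x); rewrite (dY_sym (h x) (f x)); have := fh x; lra.
Qed.

Section Selections.
Variables (alpha : X -> list Y) (beta : Y -> list X).
Hypothesis selections_inverse : forall f g,
  (forall x, In (f x) (alpha x)) -> (forall y, In (g y) (beta y)) ->
  mutually_inverse_coarse_equivalences dX dY f g.

(* Where [h x] is admissible it is the value of a selection close to [f];
   otherwise [x] is admissible for [h x], and [f] almost inverts a selection
   sending [h x] to [x]. *)
Lemma close_of_mixed_selection (f : X -> Y) (g : Y -> X) (h : X -> Y) :
  (forall x, In (f x) (alpha x)) -> (forall y, In (g y) (beta y)) -> injective h ->
  (forall x, In (h x) (alpha x) \/ In x (beta (h x))) -> close dY f h.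
Proof.
move=> fA gB h_inj hAB.
have [f' [f'A f'h]] := exists_selection_extending (R := fun x y => y = h x) fA
  (fun x y y' e e' => etrans e (esym e')).
have [g' [g'B g'h]] := exists_selection_extending (R := fun y x => h x = y) gB
  (fun y x x' e e' => h_inj _ _ (etrans e (esym e'))).
have [C1 fg'] := proj1 (proj2 (proj2 (selections_inverse fA g'B))).
have [C2 ff'] := close_of_common_coarse_inverse (selections_inverse fA g'B)
  (selections_inverse f'A g'B).
exists (Rmax C1 C2) => x; case: (hAB x) => [hA|hB].
- by rewrite -(f'h x (h x) erefl hA); apply: Rle_trans (ff' x) (Rmax_r _ _).
- by rewrite -{1}(g'h (h x) x erefl hB); apply: Rle_trans (fg' (h x)) (Rmax_l _ _).
Qed.
End Selections.
End CoarseEquivalences.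

Theorem lemma3p4 (X Y : Type) (dX : X -> X -> R) (dY : Y -> Y -> R)
  (hmX : is_metric dX) (hmY : is_metric dY) (huX : ulf dX) (huY : ulf dY)
  (alpha : X -> list Y) (beta : Y -> list X)
  (Bij1 : forall (f : X -> Y) (g : Y -> X),
      (forall x, In (f x) (alpha x)) -> (forall y, In (g y) (beta y)) ->
      mutually_inverse_coarse_equivalences dX dY f g)
  (Bij2a : union_card_ge alpha) (Bij2b : union_card_ge beta) :
  forall f : X -> Y, (forall x, In (f x) (alpha x)) ->
    exists h : X -> Y, bijective_fun h /\ coarse_equivalence dX dY h /\
      close dY f h.
Proof.
move=> f fA.
case: hmX => [_ [_ [_ dX_tri]]]; case: hmY => [_ [_ [dY_sym dY_tri]]].
have [i [i_inj iA]] : exists i : X -> Y, injective i /\ forall x, In (i x) (alpha x)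
  := @union_card_ge_injection {classic X} {classic Y} _ Bij2a.
have [j [j_inj jB]] : exists j : Y -> X, injective j /\ forall y, In (j y) (beta y)
  := @union_card_ge_injection {classic Y} {classic X} _ Bij2b.
have [h [h_bij hij]] := schroeder_bernstein i_inj j_inj.
have hAB x : In (h x) (alpha x) \/ In x (beta (h x)).
  by case: (hij x) => e; [left; rewrite e | right; rewrite -{1}e].
have fh := close_of_mixed_selection dY_sym dY_tri Bij1 fA jB (proj1 h_bij) hAB.
exists h; split=> //; split=> //.
by exists j; exact: (mutually_inverse_close dX_tri dY_sym dY_tri (Bij1 _ _ fA jB) fh).
Qed.
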